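(* Let $n\ge1$, $\epsilon>0$, $\delta>0$ be arbitrary. For every $C>0$ the open subset $B(\epsilon)\times\mathbb D_{<\delta}(T^*\mathbb T^n)$ of $(\mathbb R^3\times T^*\mathbb T^n,\ker(\alpha_{\mathrm{OT}}+\lambda_{\mathrm{can}}))$ contains an embedded hypersurface $$S_C=\mathbb D^2_{\le\pi}\times\Bigl\{(s_1,\dots,s_n;t_1,\dots,t_n)\in\mathbb R^{2n}\ \Bigm|\ |s_j|<C,\ |t_j|<\tfrac{\delta}{2\sqrt n}\text{ for all }j\Bigr\}$$ on which the contact structure induces the singular distribution $\ker\bigl(r\sin r\,d\vartheta-\sum_{j=1}^n t_j\,ds_j\bigr)$, with $(r,\vartheta)$ polar coordinates on the disk.
   Context: $\alpha_{\mathrm{OT}}=\cos r\,dz+r\sin r\,d\vartheta$ on $\mathbb R^3$ in cylindrical coordinates $(r,\vartheta,z)$. Fix a small $\delta_0>0$ and set $B(h)=\mathbb D^2_{<\pi+\delta_0}\times(-h,h)$. On $T^*\mathbb T^n$ use coordinates $(q_1,\dots,q_n;p_1,\dots,p_n)$ with $q_j\in\mathbb R/2\pi\mathbb Z$, $\lambda_{\mathrm{can}}=-\sum_j p_j\,dq_j$, and $\mathbb D_{<\delta}(T^*\mathbb T^n)=\{\|\mathbf p\|<\delta\}$ with the Euclidean norm of $\mathbf p=(p_1,\dots,p_n)$. The induced singular distribution of an embedding $\iota$ is $(D\iota)^{-1}(\xi)$. *)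

From mathcomp Require Import all_boot all_order all_algebra.
From mathcomp Require Import all_classical all_reals all_analysis.
Set Implicit Arguments. Unset Strict Implicit. Unset Printing Implicit Defensive.
Import Order.TTheory GRing.Theory Num.Theory.
Import numFieldNormedType.Exports.
Local Open Scope ring_scope.
Local Open Scope classical_set_scope.

(* Points of the hypersurface model R^2 x R^n x R^n :
   ((x, y), (s, t)), with (x,y) Cartesian coordinates on the disk. *)
Notation dom R n := ((R * R) * ('rV[R]_n * 'rV[R]_n))%type.
(* Points of R^3 x R^n x R^n = universal cover of R^3 x T^*T^n :
   ((x, y, z), (q, p)), q-coordinates are to be read modulo 2 pi. *)
Notation tgt R n := ((R * R * R) * ('rV[R]_n * 'rV[R]_n))%type.

Definition sinc (R : realType) (r : R) : R := if r == 0 then 1 else sin r / r.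

Fixpoint Ck_on (R : realType) (V W : normedModType R) (U : set V) (k : nat)
  (f : V -> W) : Prop :=
  {within U, continuous f} /\
  match k with
  | 0 => True
  | k'.+1 => (forall x v, U x -> derivable f x v) /\
             (forall v, Ck_on U k' (fun x => 'D_v f x))
  end.

Definition smooth_on (R : realType) (V W : normedModType R) (U : set V)
  (f : V -> W) : Prop := open U /\ forall k, Ck_on U k f.

(* Deck translation by m in the q-coordinates. *)
Definition tgt_shift (R : realType) (n : nat) (a : tgt R n) (m : 'rV[R]_n)
  : tgt R n := (a.1, (a.2.1 + m, a.2.2)).

Definition lattice2pi (R : realType) (n : nat) (m : 'rV[R]_n) : Prop :=
  forall j, exists k : int, m 0 j = 2 * pi * k%:~R.

(* iota : dom -> tgt, read as a map into R^3 x T^*T^n (q mod 2 pi), is a smooth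
   embedding of S: smooth on an open neighbourhood of S, an immersion on S,
   injective on S modulo the deck group, and a homeomorphism onto its image
   (inverse continuous for the quotient metric). *)
Definition embedding_mod (R : realType) (n : nat) (S : set (dom R n))
  (iota : dom R n -> tgt R n) : Prop :=
  [/\ exists U : set (dom R n), S `<=` U /\ smooth_on U iota,
      (forall p v, S p -> 'D_v iota p = 0 -> v = 0),
      (forall p p', S p -> S p' ->
         (exists m, lattice2pi m /\ iota p' = tgt_shift (iota p) m) -> p' = p)
    & (forall p, S p -> forall e : R, 0 < e -> exists2 d : R, 0 < d &
         forall p', S p' ->
           (exists m, lattice2pi m /\ `|iota p' - tgt_shift (iota p) m| < d) ->
           `|p' - p| < e)].

Definition S_C (R : realType) (n : nat) (C delta : R) : set (dom R n) :=
  [set p : dom R n | p.1.1 ^+ 2 + p.1.2 ^+ 2 <= pi ^+ 2 /\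
           forall j, `|p.2.1 0 j| < C /\ `|p.2.2 0 j| < delta / (2 * Num.sqrt n%:R)].

(* B(eps) x D_{<delta}(T^*T^n), with B(h) = D^2_{< pi + delta0} x (-h, h);
   invariant under the deck translations. *)
Definition target_region (R : realType) (n : nat) (delta0 eps delta : R)
  : set (tgt R n) :=
  [set a : tgt R n | a.1.1.1 ^+ 2 + a.1.1.2 ^+ 2 < (pi + delta0) ^+ 2 /\
           `|a.1.2| < eps /\
           Num.sqrt (\sum_(j < n) a.2.2 0 j ^+ 2) < delta].

(* alpha_OT + lambda_can at a, evaluated on w, in Cartesian (x,y):
   cos r dz + r sin r dtheta - sum p_j dq_j, with r dtheta = (x dy - y dx)/r. *)
Definition alpha (R : realType) (n : nat) (a w : tgt R n) : R :=
  let r := Num.sqrt (a.1.1.1 ^+ 2 + a.1.1.2 ^+ 2) in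
  cos r * w.1.2 + sinc r * (a.1.1.1 * w.1.1.2 - a.1.1.2 * w.1.1.1)
  - \sum_(j < n) a.2.2 0 j * w.2.1 0 j.

Definition beta (R : realType) (n : nat) (p v : dom R n) : R :=
  let r := Num.sqrt (p.1.1 ^+ 2 + p.1.2 ^+ 2) in
  sinc r * (p.1.1 * v.1.2 - p.1.2 * v.1.1)
  - \sum_(j < n) p.2.2 0 j * v.2.1 0 j.

From HB Require Import structures.
From mathcomp Require Import all_boot all_order all_algebra.
From mathcomp Require Import all_classical all_reals all_analysis.
From mathcomp Require Import ring lra.
Set Implicit Arguments. Unset Strict Implicit. Unset Printing Implicit Defensive.
Import Order.TTheory GRing.Theory Num.Theory.
Import numFieldNormedType.Exports.
Local Open Scope ring_scope.
Local Open Scope classical_set_scope.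

(* For a scale eta > 0 and weights a_j = K^j,
     emb (x, y, s, t) = ((x, y, eta <a, s>), (s, t + eta cos r a)),
   with r = sqrt (x^2 + y^2) and <a, s> = sum_j a_j s_j, read with q = s
   modulo 2 pi.  The proof has four independent ingredients:
   - Pullback: alpha (emb p) (d emb v) = beta p v identically, because the
     dz-term eta cos r <a, ds> cancels the extra term of -sum_j p_j dq_j.
   - Smoothness: cos r is an entire power series in x^2 + y^2; functions
     built from linear forms, sums, products and entire series form a class
     closed under directional derivatives, which gives C^k for every k.
   - Embedding modulo (2 pi Z)^n: a deck translation m relating points of
     S_C has entries bounded by 2 C + 1; for K = 1 + (2 C + 1) / pi a nonzero
     such m has |<a, m>| >= pi, whereas the heights eta <a, s> are close.
   - Target region: for eta small the height and the momentum correction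
     eta cos r a are small. *)

Section PowerSeries.
Variable R : realType.

Definition entire (c : R ^nat) : Prop := forall x : R, cvgn (pseries c x).
Definition psum (c : R ^nat) (x : R) : R := limn (pseries c x).

Lemma entire_coef_bound (c : R ^nat) (K : R) : entire c -> 0 < K ->
  exists2 B : R, 0 <= B & forall n, `|c n| * K ^+ n <= B.
Proof.
move=> ec K0; have [A [_ Af]] := cvg_series_bounded (ec K).
exists `|A + 1| => // n.
have AB : A < `|A + 1| by rewrite (lt_le_trans _ (ler_norm _))// ltrDl ltr01.
have /= := Af _ AB n I.
by rewrite normrM normrX (ger0_norm (ltW K0)).
Qed.

(* For K = 4 (|x| + 1) the weight (n+1) |x|^n of the derived series is at
   most 2^-n K^(n+1); this makes the derived series geometrically dominated. *)
Lemma derived_weight_bound (x : R) n :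
  n.+1%:R * `|x| ^+ n * 2 ^+ n <= (4 * (`|x| + 1)) ^+ n.+1.
Proof.
have h1 : n.+1%:R <= (2 : R) ^+ n by rewrite -natrX ler_nat; apply: ltn_expl.
have h2 : `|x| ^+ n <= (`|x| + 1) ^+ n.
  by rewrite lerXn2r// ?nnegrE// ?addr_ge0// lerDl.
apply: (@le_trans _ _ (2 ^+ n * (`|x| + 1) ^+ n * 2 ^+ n)).
  by rewrite ler_wpM2r ?exprn_ge0// ler_pM// exprn_ge0.
rewrite exprS -mulrA [_ * 2 ^+ n]mulrC mulrA -!exprMn.
have -> : (2 * 2 : R) = 4 by rewrite -natrM.
rewrite -[X in X <= _]mul1r ler_wpM2r ?exprn_ge0 ?mulr_ge0 ?addr_ge0//.
by have := normr_ge0 x; lra.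
Qed.

Lemma entire_diffs (c : R ^nat) : entire c -> entire (pseries_diffs c).
Proof.
move=> ec x; set K : R := 4 * (`|x| + 1).
have K0 : 0 < K by rewrite /K; have := normr_ge0 x; lra.
have [B B0 cB] := entire_coef_bound ec K0.
apply: normed_cvg; rewrite /normed_series_of /=.
have G0 n : 0 <= geometric B 2^-1 n.
  by rewrite /geometric /= mulr_ge0// exprn_ge0// invr_ge0 ler0n.
have GC : cvgn (series (geometric B 2^-1)).
  by apply: is_cvg_geometric_series; rewrite ger0_norm ?invr_ge0 ?ler0n// invf_lt1 ?ltr1n.
have LE n : `|pseries_diffs c n * x ^+ n| <= geometric B 2^-1 n.
  rewrite /geometric /= /pseries_diffs normrM normrM normrX normr_nat.
  have Kn : 0 < K ^+ n.+1 by rewrite exprn_gt0.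
  have cn : `|c n.+1| <= B / K ^+ n.+1 by rewrite ler_pdivlMr.
  apply: (@le_trans _ _ (n.+1%:R * (B / K ^+ n.+1) * `|x| ^+ n)).
    by rewrite ler_wpM2r ?exprn_ge0// ler_wpM2l.
  have P2 : 0 < (2 : R) ^+ n by rewrite exprn_gt0.
  have -> : n.+1%:R * (B / K ^+ n.+1) * `|x| ^+ n =
      B * ((n.+1%:R * `|x| ^+ n) / K ^+ n.+1) by ring.
  rewrite ler_wpM2l// ler_pdivrMr// exprVn [X in _ <= X]mulrC ler_pdivlMr//.
  exact: derived_weight_bound.
exact: (series_le_cvg _ G0 LE GC).
Qed.

Lemma psum_is_derive (c : R ^nat) (x : R) : entire c ->
  is_derive x 1 (psum c) (psum (pseries_diffs c) x).
Proof.
move=> ec; apply: (@pseries_snd_diffs R c (`|x| + 1)).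
- exact: ec.
- exact: entire_diffs.
- exact/entire_diffs/entire_diffs.
- by rewrite [X in _ < X]ger0_norm ?addr_ge0// ltrDl.
Qed.

Lemma psum_differentiable (c : R ^nat) (x : R) : entire c ->
  differentiable (psum c) x.
Proof. by move=> ec; apply/derivable1_diffP; have [] := psum_is_derive x ec. Qed.

Lemma psum_diff (c : R ^nat) (x : R) : entire c ->
  'd (psum c) x = (fun h => h * psum (pseries_diffs c) x) :> (R -> R).
Proof.
move=> ec; rewrite diff1E; last exact: psum_differentiable.
by rewrite derive1E; have [_ ->] := psum_is_derive x ec.
Qed.

(* cos (sqrt u) = sum_k (-1)^k u^k / (2k)!, an entire function of u; hence
   cos r is a smooth function of x^2 + y^2 at r = 0 too. *)
Definition cos_sqrt_coef (k : nat) : R := (-1) ^ k / (k.*2)`!%:R.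

Lemma pseries_cos_sqrt (u : R) : 0 <= u ->
  pseries cos_sqrt_coef u = series (cos_coeff' (Num.sqrt u)).
Proof.
move=> u0; apply/funext => k; rewrite /pseries /series /=; apply: eq_bigr => i _.
by rewrite /cos_coeff' /cos_sqrt_coef -muln2 mulnC exprM sqr_sqrtr//; ring.
Qed.

Lemma psum_cos_sqrt (u : R) : 0 <= u -> psum cos_sqrt_coef u = cos (Num.sqrt u).
Proof.
by move=> u0; rewrite /psum pseries_cos_sqrt//; apply: cvg_lim => //; apply: cvg_cos_coeff'.
Qed.

Lemma entire_cos_sqrt : entire cos_sqrt_coef.
Proof.
move=> x; apply: (@is_cvg_pseries_inside _ _ (`|x| + 1)).
  rewrite pseries_cos_sqrt ?addr_ge0//; apply/cvg_ex; eexists; exact: cvg_cos_coeff'.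
by rewrite [X in _ < X]ger0_norm ?addr_ge0// ltrDl.
Qed.

End PowerSeries.

Section SmoothExpressions.
Variables (R : realType) (V : normedModType R).

(* The class is closed under
   directional differentiation, which makes all its members smooth. *)
Inductive smooth_expr : (V -> R) -> Prop :=
| SE_cst (c : R) : smooth_expr (fun _ => c)
| SE_lin (l : V -> R) : (forall x, differentiable l x) ->
    (forall x v, 'd l x v = l v) -> smooth_expr l
| SE_psum (c : R ^nat) (g : V -> R) : entire c -> smooth_expr g ->
    smooth_expr (fun x => psum c (g x))
| SE_add (f g : V -> R) : smooth_expr f -> smooth_expr g ->
    smooth_expr (fun x => f x + g x)
| SE_mul (f g : V -> R) : smooth_expr f -> smooth_expr g ->
    smooth_expr (fun x => f x * g x).

Lemma smooth_expr_diff (f : V -> R) : smooth_expr f ->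
  (forall x, differentiable f x) /\ forall v, smooth_expr (fun x => 'd f x v).
Proof.
elim=> {f}.
- move=> c; split=> [x|v]; first exact: differentiable_cst.
  have -> : (fun x => 'd (fun _ : V => c) x v) = fun _ => 0.
    by apply/funext => x; rewrite (diff_cst (V:=V) c x).
  exact: SE_cst.
- move=> l dl el; split=> // v.
  have -> : (fun x => 'd l x v) = fun _ => l v by apply/funext => x; rewrite el.
  exact: SE_cst.
- move=> c g ec Fg [dg IH]; split=> [x|v].
    exact: (differentiable_comp (dg x) (psum_differentiable _ ec)).
  have -> : (fun x => 'd (fun x => psum c (g x)) x v) =
      fun x => 'd g x v * psum (pseries_diffs c) (g x).
    apply/funext => x.
    rewrite (_ : (fun x => psum c (g x)) = psum c \o g)//.
    rewrite diff_comp ?dg //=; last exact: psum_differentiable.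
    by rewrite psum_diff.
  by apply: SE_mul; [exact: IH | apply: SE_psum => //; exact: entire_diffs].
- move=> f g _ [df IHf] _ [dg IHg]; split=> [x|v].
    exact: (differentiableD (df x) (dg x)).
  have -> : (fun x => 'd (fun x => f x + g x) x v) = fun x => 'd f x v + 'd g x v.
    by apply/funext => x; rewrite (_ : (fun x => f x + g x) = f + g)// diffD.
  exact: SE_add.
- move=> f g Ff [df IHf] Fg [dg IHg]; split=> [x|v].
    exact: (differentiableM (df x) (dg x)).
  have -> : (fun x => 'd (fun x => f x * g x) x v) =
      fun x => f x * 'd g x v + g x * 'd f x v.
    by apply/funext => x; rewrite (_ : (fun x => f x * g x) = f * g)// diffM.
  by apply: SE_add; apply: SE_mul.
Qed.

Section AffinePlusScalar.
Variable W : normedModType R.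

(* Maps x |-> c + L x + f x *: w with L continuous linear and f a smooth
   expression; the embedding of the main theorem has this shape. *)
Lemma affine_scalar_differentiable (c : W) (L : V -> W) (f : V -> R) (w : W) x :
  differentiable L x -> differentiable f x ->
  differentiable (fun x => c + L x + f x *: w) x.
Proof.
move=> dL df.
have -> : (fun x => c + L x + f x *: w) = (cst c + L) + (fun x => f x *: w) by [].
apply: differentiableD; last exact: differentiableZl.
by apply: differentiableD => //; exact: differentiable_cst.
Qed.

Lemma affine_scalar_diff (c : W) (L : V -> W) (f : V -> R) (w : W) x v :
  differentiable L x -> differentiable f x ->
  'd (fun x => c + L x + f x *: w) x v = 'd L x v + 'd f x v *: w.
Proof.
move=> dL df.
have -> : (fun x => c + L x + f x *: w) = (cst c + L) + (fun x => f x *: w) by [].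
have d1 : differentiable (cst c + L) x.
  by apply: differentiableD => //; exact: differentiable_cst.
have d2 : differentiable (fun x => f x *: w) x by exact: differentiableZl.
by rewrite (diffD d1 d2) /= (diffD (differentiable_cst c x) dL) /= diff_cst diffZl //= add0r.
Qed.

(* Such maps are C^k on the whole space for every k: each derivative has the
   same shape, with a constant in place of c + L x. *)
Lemma Ck_affine_scalar k : forall (c : W) (L : V -> W) (f : V -> R) (w : W),
  (forall x, differentiable L x) -> (forall x v, 'd L x v = L v) ->
  smooth_expr f -> Ck_on setT k (fun x => c + L x + f x *: w).
Proof.
elim: k => [|k IH] c L f w dL eL Ff; have [df Fd] := smooth_expr_diff Ff.
  split=> //; apply: continuous_subspaceT => x.
  exact/differentiable_continuous/affine_scalar_differentiable.
split.
  apply: continuous_subspaceT => x.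
  exact/differentiable_continuous/affine_scalar_differentiable.
split; first by move=> x v _; apply/diff_derivable/affine_scalar_differentiable.
move=> v.
have -> : (fun x => 'D_v (fun x => c + L x + f x *: w) x) =
    (fun x => L v + (fun _ => 0 : W) x + 'd f x v *: w).
  apply/funext => x; rewrite deriveE; last exact: affine_scalar_differentiable.
  by rewrite affine_scalar_diff// eL addr0.
apply: IH => // x u; by rewrite (diff_cst (V:=V) (0 : W) x).
Qed.

End AffinePlusScalar.
End SmoothExpressions.

Section NormFacts.
Variable R : realType.

Lemma bounded_linear_diff (U W : normedModType R) (l : U -> W) (M : R) :
  linear l -> 0 <= M -> (forall x, `|l x| <= M * `|x|) ->
  (forall x, differentiable l x) /\ (forall x v, 'd l x v = l v).
Proof.
move=> ll M0 lb.
pose lL : {linear U -> W} := HB.pack l (GRing.isLinear.Build _ _ _ _ l ll).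
have cl : continuous lL.
  apply: bounded_linear_continuous; apply/linear_boundedP.
  exists M; split; first exact: ger0_real.
  by move=> r Mr x; apply: le_trans (lb x) _; rewrite ler_wpM2r// ltW.
split=> [x|x v]; first exact: (linear_differentiable x cl).
by rewrite (diff_lin x cl).
Qed.

Lemma row_entry_le m (M : 'rV[R]_m) j : `|M 0 j| <= `|M|.
Proof.
rewrite (_ : `|M| = mx_norm M)// mx_normrE.
exact: (le_bigmax _ (fun ij : 'I_1 * 'I_m => `|M ij.1 ij.2|) (0, j)).
Qed.

Lemma row_norm_lt m (M : 'rV[R]_m) e : 0 < e -> (forall j, `|M 0 j| < e) ->
  `|M| < e.
Proof.
move=> e0 H; rewrite (_ : `|M| = mx_norm M)// mx_normrE.
by apply/bigmax_ltP; split=> // -[i j] _ /=; rewrite (ord1 i); exact: H.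
Qed.

Section PairNorm.
Variables U W : normedModType R.
Implicit Types u : U * W.

Lemma norm_fst u : `|u.1| <= `|u|.
Proof. by rewrite prod_normE le_max lexx. Qed.

Lemma norm_snd u : `|u.2| <= `|u|.
Proof. by rewrite prod_normE le_max lexx orbT. Qed.

Lemma norm_pair_lt u e : `|u.1| < e -> `|u.2| < e -> `|u| < e.
Proof. by move=> h1 h2; rewrite prod_normE gt_max h1 h2. Qed.

Lemma norm_pair_le u e : `|u.1| <= e -> `|u.2| <= e -> `|u| <= e.
Proof. by move=> h1 h2; rewrite prod_normE ge_max h1 h2. Qed.
End PairNorm.

Lemma tgt_coords_lt n (u : tgt R n) e : `|u| < e ->
  [/\ `|u.1.1.1| < e, `|u.1.1.2| < e, `|u.1.2| < e,
      forall j, `|u.2.1 0 j| < e & forall j, `|u.2.2 0 j| < e].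
Proof.
move=> H.
have h1 := le_lt_trans (norm_fst u) H; have h2 := le_lt_trans (norm_snd u) H.
have h11 := le_lt_trans (norm_fst u.1) h1.
have h21 := le_lt_trans (norm_fst u.2) h2.
have h22 := le_lt_trans (norm_snd u.2) h2.
split.
- exact: le_lt_trans (norm_fst u.1.1) h11.
- exact: le_lt_trans (norm_snd u.1.1) h11.
- exact: le_lt_trans (norm_snd u.1) h1.
- by move=> j; apply: le_lt_trans (row_entry_le _ j) h21.
- by move=> j; apply: le_lt_trans (row_entry_le _ j) h22.
Qed.

Lemma continuous_at_dist (U W : normedModType R) (f : U -> W) x :
  {for x, continuous f} -> forall e, 0 < e ->
  exists2 d, 0 < d & forall y, `|x - y| < d -> `|f x - f y| < e.
Proof.
move=> cf e e0; have /cvgrPdist_lt/(_ e e0)/nbhs_ballP[d d0 H] := cf.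
by exists d => // y xy; apply: H; rewrite -ball_normE.
Qed.

Lemma euclid_norm_lt n (v : 'rV[R]_n) delta : (1 <= n)%N -> 0 < delta ->
  (forall j, `|v 0 j| < delta / Num.sqrt n%:R) ->
  Num.sqrt (\sum_(j < n) v 0 j ^+ 2) < delta.
Proof.
move=> n1 dl0 vj.
set tau := delta / Num.sqrt n%:R.
have sn0 : 0 < Num.sqrt n%:R :> R by rewrite sqrtr_gt0 ltr0n.
have sq j : v 0 j ^+ 2 < tau ^+ 2.
  by rewrite -real_normK ?num_real// ltrXn2r ?normr_ge0 ?vj.
have hs : \sum_(j < n) v 0 j ^+ 2 < \sum_(j < n) tau ^+ 2.
  apply: (@ltr_sum R _ (index_enum 'I_n) xpredT) => [|j _]; last exact: sq.
  by apply/hasP; exists (Ordinal n1) => //; rewrite mem_index_enum.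
have e2 : \sum_(j < n) tau ^+ 2 = delta ^+ 2.
  rewrite sumr_const card_ord -mulr_natl /tau.
  have sqn : Num.sqrt n%:R ^+ 2 = n%:R :> R by rewrite sqr_sqrtr ?ler0n.
  by rewrite -[X in X * _]sqn; field; exact: lt0r_neq0.
rewrite e2 in hs.
by rewrite -(ger0_norm (ltW dl0)) -sqrtr_sqr ltr_sqrt// exprn_gt0.
Qed.

End NormFacts.

Section WeightedLatticeSums.
Variables (R : realType) (Bm : R).
Hypothesis Bm0 : 0 <= Bm.

(* Weights K^j with pi K = pi + Bm grow fast enough that a weighted sum of
   multiples of 2 pi with entries bounded by Bm is either trivial or at least
   pi in absolute value: the top nonzero entry dominates all lower ones. *)
Definition lattice_base : R := 1 + Bm / pi.

Lemma lattice_baseE : pi * lattice_base = pi + Bm.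
Proof.
by rewrite /lattice_base mulrDr mulr1 mulrCA divff ?mulr1 // lt0r_neq0 ?pi_gt0.
Qed.

Lemma lattice_base_ge1 : 1 <= lattice_base.
Proof. by rewrite /lattice_base lerDl divr_ge0// ltW// pi_gt0. Qed.

Lemma weighted_sum_bound m (k : 'I_m -> R) : (forall j, `|k j| <= Bm) ->
  `|\sum_(j < m) lattice_base ^+ j * k j| <= pi * (lattice_base ^+ m - 1).
Proof.
have K0 : 0 <= lattice_base by apply: le_trans lattice_base_ge1.
elim: m k => [|m IH] k kB; first by rewrite big_ord0 normr0 expr0 subrr mulr0.
rewrite big_ord_recr /=; apply: le_trans (ler_normD _ _) _.
have := IH (fun j => k (widen_ord (leqnSn m) j)) (fun j => kB _) => /= h.
apply: le_trans (lerD h (_ : `|lattice_base ^+ m * k ord_max| <= lattice_base ^+ m * Bm)) _.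
  by rewrite normrM ger0_norm ?exprn_ge0// ler_wpM2l ?exprn_ge0.
rewrite exprS; set X := lattice_base ^+ m.
suff -> : pi * (lattice_base * X - 1) = pi * (X - 1) + X * Bm by [].
by rewrite mulrBr mulrA lattice_baseE; ring.
Qed.

Lemma weighted_lattice_sum m (k : 'I_m -> R) : (forall j, `|k j| <= Bm) ->
  (forall j, exists z : int, k j = 2 * pi * z%:~R) ->
  (forall j, k j = 0) \/ pi <= `|\sum_(j < m) lattice_base ^+ j * k j|.
Proof.
have K1 := lattice_base_ge1.
have pi0 : 0 < pi :> R := pi_gt0 R.
elim: m k => [|m IH] k kB kZ; first by left => -[].
rewrite big_ord_recr /=.
set k' := fun j => k (widen_ord (leqnSn m) j).
have [km0|kmn0] := eqVneq (k ord_max) 0.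
  rewrite km0 mulr0 addr0.
  case: (IH k' (fun j => kB _) (fun j => kZ _)) => [allz|]; last by right.
  left=> j; case: (unliftP ord_max j) => [j' ->|->]//.
  by rewrite -[RHS](allz j'); congr k; apply: val_inj; rewrite /= /bump leqNgt ltn_ord.
right.
have hb := weighted_sum_bound (fun j => kB (widen_ord (leqnSn m) j)).
have [z kz] := kZ ord_max.
have z1 : 1 <= `|(z%:~R : R)|.
  apply: norm_intr_ge1; first exact: intr_int.
  by apply: contra_neq kmn0; rewrite kz => ->; rewrite mulr0.
have kmb : 2 * pi <= `|k ord_max|.
  have p2 : 0 <= 2 * pi :> R by rewrite mulr_ge0// ltW.
  by rewrite kz normrM (ger0_norm p2) -[X in X <= _]mulr1 ler_wpM2l.
set S' := \sum_(_ < m) _ in hb *.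
have t1 : `|lattice_base ^+ m * k ord_max| <=
    `|S' + lattice_base ^+ m * k ord_max| + `|S'|.
  by rewrite -[X in `|X| <= _](addKr S') addrC; exact: ler_normB.
have X0 : 1 <= lattice_base ^+ m by exact: exprn_ege1.
rewrite normrM ger0_norm ?exprn_ge0// in t1; last exact: le_trans K1.
have : 2 * pi * lattice_base ^+ m <= lattice_base ^+ m * `|k ord_max|.
  by rewrite mulrC ler_wpM2l// exprn_ge0// (le_trans _ K1).
set X := lattice_base ^+ m in X0 t1 hb *; set Y := `|k ord_max| in kmb t1 *.
nra.
Qed.

End WeightedLatticeSums.

Section Construction.
Variables (R : realType) (n : nat) (eta : R) (a : 'I_n -> R).

(* The dz term of alpha contributes eta cos r <a, ds>, which cancels the
   extra term that -sum_j p_j dq_j acquires; what remains is beta.  The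
   weights a make the height z = eta <a, s> separate lattice translates. *)
Definition zlin (s : 'rV[R]_n) : R := \sum_j a j * s 0 j.
Definition arow : 'rV[R]_n := \row_j a j.
Definition weight_sum : R := \sum_j `|a j|.

(* cos r, written as an entire function of x^2 + y^2 so that it is smooth. *)
Definition cos_radius (p : dom R n) : R :=
  psum (@cos_sqrt_coef R) (p.1.1 ^+ 2 + p.1.2 ^+ 2).

Definition emb (p : dom R n) : tgt R n :=
  ((p.1.1, p.1.2, eta * zlin p.2.1), (p.2.1, p.2.2 + (eta * cos_radius p) *: arow)).

Definition emb_lin (p : dom R n) : tgt R n :=
  ((p.1.1, p.1.2, eta * zlin p.2.1), (p.2.1, p.2.2)).
Definition emb_dir : tgt R n := ((0, 0, 0), (0, eta *: arow)).

Lemma embE : emb = fun p => 0 + emb_lin p + cos_radius p *: emb_dir.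
Proof.
apply/funext => -[[x y] [s t]]; rewrite /emb /emb_lin /emb_dir /= add0r.
by congr ((_, _, _), (_, _)); rewrite /= ?scaler0 ?addr0// scalerA mulrC.
Qed.

Lemma cos_radiusE p : cos_radius p = cos (Num.sqrt (p.1.1 ^+ 2 + p.1.2 ^+ 2)).
Proof. by rewrite /cos_radius psum_cos_sqrt// addr_ge0// sqr_ge0. Qed.

Lemma zlinB (s s' : 'rV[R]_n) : zlin (s' - s) = zlin s' - zlin s.
Proof. by rewrite /zlin -sumrB; apply: eq_bigr => j _; rewrite !mxE; ring. Qed.

Lemma zlin_le (s : 'rV[R]_n) d : (forall j, `|s 0 j| <= d) ->
  `|zlin s| <= weight_sum * d.
Proof.
move=> H; rewrite /zlin /weight_sum mulr_suml.
apply: le_trans (ler_norm_sum _ _ _) _.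
by apply: ler_sum => j _; rewrite normrM ler_wpM2l.
Qed.

Lemma weight_sum_ge0 : 0 <= weight_sum.
Proof. exact: sumr_ge0. Qed.

Lemma weight_le_sum j : `|a j| <= weight_sum.
Proof. by rewrite /weight_sum (bigD1 j)//= lerDl sumr_ge0. Qed.

Lemma emb_lin_linear : linear emb_lin.
Proof.
move=> k [[x y] [s t]] [[x' y'] [s' t']]; rewrite /emb_lin /=.
congr ((_, _, _), (_, _)) => /=.
rewrite (_ : k *: (eta * zlin s) = k * (eta * zlin s))//.
rewrite mulrA (mulrC k eta) -mulrA -mulrDr; congr (_ * _).
by rewrite /zlin mulr_sumr -big_split /=; apply: eq_bigr => j _; rewrite !mxE; ring.
Qed.

Lemma emb_lin_bound p : `|emb_lin p| <= (1 + `|eta| * weight_sum) * `|p|.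
Proof.
have S0 : 0 <= weight_sum by apply: sumr_ge0.
have M1 : `|p| <= (1 + `|eta| * weight_sum) * `|p|.
  by rewrite -[X in X <= _]mul1r ler_wpM2r// lerDl mulr_ge0.
have hx := le_trans (norm_fst p.1) (norm_fst p).
have hy := le_trans (norm_snd p.1) (norm_fst p).
have hs := le_trans (norm_fst p.2) (norm_snd p).
have ht := le_trans (norm_snd p.2) (norm_snd p).
apply: norm_pair_le; [apply: norm_pair_le; [apply: norm_pair_le|]|apply: norm_pair_le];
  rewrite /=; try exact: le_trans M1.
rewrite normrM; apply: (@le_trans _ _ (`|eta| * (weight_sum * `|p|))).
  by rewrite ler_wpM2l// (le_trans (zlin_le (row_entry_le _)))// ler_wpM2l.
by rewrite mulrA mulrDl mul1r lerDr.
Qed.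

Lemma emb_lin_diff :
  (forall x, differentiable emb_lin x) /\ (forall x v, 'd emb_lin x v = emb_lin v).
Proof.
apply: (bounded_linear_diff emb_lin_linear _ emb_lin_bound).
by rewrite addr_ge0// mulr_ge0// sumr_ge0.
Qed.

Lemma coord_x_expr : smooth_expr (fun p : dom R n => p.1.1).
Proof.
have [h1 h2] := @bounded_linear_diff _ _ _ (fun p : dom R n => p.1.1) 1
  (fun _ _ _ => erefl) ler01
  (fun p => ltac:(by rewrite mul1r (le_trans (norm_fst _) (norm_fst _)))).
exact: SE_lin.
Qed.

Lemma coord_y_expr : smooth_expr (fun p : dom R n => p.1.2).
Proof.
have [h1 h2] := @bounded_linear_diff _ _ _ (fun p : dom R n => p.1.2) 1
  (fun _ _ _ => erefl) ler01
  (fun p => ltac:(by rewrite mul1r (le_trans (norm_snd _) (norm_fst _)))).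
exact: SE_lin.
Qed.

Lemma cos_radius_expr : smooth_expr cos_radius.
Proof.
have -> : cos_radius = fun p => psum (@cos_sqrt_coef R) (p.1.1 * p.1.1 + p.1.2 * p.1.2).
  by apply/funext => p; rewrite /cos_radius !expr2.
apply: SE_psum; first exact: entire_cos_sqrt.
by apply: SE_add; apply: SE_mul; (exact: coord_x_expr || exact: coord_y_expr).
Qed.

Lemma cos_radius_differentiable p : differentiable cos_radius p.
Proof. by have [h _] := smooth_expr_diff cos_radius_expr; exact: h. Qed.

Lemma cos_radius_diff_fiber p v : v.1 = 0 -> 'd cos_radius p v = 0.
Proof.
move=> v10; rewrite -deriveE; last exact: cos_radius_differentiable.
rewrite /derive (_ : (fun h : R => _) = fun _ => 0); first exact: lim_cst.
apply/funext => h /=.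
have E : (h *: v + p).1 = p.1.
  by rewrite (_ : (h *: v + p).1 = h *: v.1 + p.1)// v10 scaler0 add0r.
by rewrite /cos_radius E subrr scaler0.
Qed.

Lemma emb_smooth k : Ck_on setT k emb.
Proof.
have [dL eL] := emb_lin_diff.
by rewrite embE; apply: Ck_affine_scalar => //; exact: cos_radius_expr.
Qed.

Lemma emb_derive p v : 'D_v emb p =
  ((v.1.1, v.1.2, eta * zlin v.2.1),
   (v.2.1, v.2.2 + (eta * 'd cos_radius p v) *: arow)).
Proof.
have [dL eL] := emb_lin_diff.
have dc := cos_radius_differentiable p.
rewrite embE deriveE; last exact: affine_scalar_differentiable.
rewrite affine_scalar_diff// eL.
case: v => [[x y] [s t]]; rewrite /emb_lin /emb_dir /=.
by congr ((_, _, _), (_, _)); rewrite /= ?scaler0 ?addr0// scalerA mulrC.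
Qed.

Lemma alpha_emb p v : alpha (emb p) ('D_v emb p) = beta p v.
Proof.
rewrite emb_derive /alpha /beta /emb /= -cos_radiusE.
set c := cos_radius p.
have -> : \sum_(j < n) (p.2.2 + (eta * c) *: arow) 0 j * v.2.1 0 j =
    \sum_(j < n) p.2.2 0 j * v.2.1 0 j + eta * c * zlin v.2.1.
  rewrite /zlin mulr_sumr -big_split /=.
  by apply: eq_bigr => j _; rewrite !mxE; ring.
ring.
Qed.

(* emb is an immersion: (x, y, s) is read off directly, and then so is t. *)
Lemma emb_immersion p v : 'D_v emb p = 0 -> v = 0.
Proof.
rewrite emb_derive => E.
have hx : v.1.1 = 0 by have := congr1 (fun u : tgt R n => u.1.1.1) E.
have hy : v.1.2 = 0 by have := congr1 (fun u : tgt R n => u.1.1.2) E.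
have hs : v.2.1 = 0 by have := congr1 (fun u : tgt R n => u.2.1) E.
have ht := congr1 (fun u : tgt R n => u.2.2) E; rewrite /= in ht.
have v10 : v.1 = 0 by case: v {E hs ht} hx hy => [[x y] w] /= -> ->.
rewrite cos_radius_diff_fiber// mulr0 scale0r addr0 in ht.
by case: v {E v10} hx hy hs ht => [[x y] [s t]] /= -> -> -> ->.
Qed.

End Construction.

Section EmbeddingOfS.
Variables (R : realType) (n : nat) (eta C delta : R).
Hypotheses (eta0 : 0 < eta) (C0 : 0 < C).

(* Weights adapted to S_C: s-coordinates of points of S_C differ by less
   than 2 C, so a deck translation relating two points of S_C, even only
   approximately, has entries of absolute value at most 2 C + 1. *)
Definition weights (j : 'I_n) : R := lattice_base (2 * C + 1) ^+ j.

Local Notation em := (emb eta weights).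
Local Notation z := (zlin weights).
Local Notation Sa := (weight_sum weights).

Lemma S_C_s_close (p p' : dom R n) : S_C C delta p -> S_C C delta p' ->
  forall j, `|p'.2.1 0 j - p.2.1 0 j| < 2 * C.
Proof.
move=> [_ Sp] [_ Sp'] j; have [h _] := Sp j; have [h' _] := Sp' j.
by apply: le_lt_trans (ler_normB _ _) _; lra.
Qed.

Lemma small_deck_trivial (m : 'rV[R]_n) : lattice2pi m ->
  (forall j, `|m 0 j| <= 2 * C + 1) -> `|z m| < pi -> m = 0.
Proof.
move=> lm mB zl.
have Bm0 : 0 <= 2 * C + 1 by rewrite addr_ge0// mulr_ge0// ltW.
case: (weighted_lattice_sum Bm0 mB lm) => [allz|h].
  by apply/rowP => j; rewrite mxE allz.
by have := lt_le_trans zl h; rewrite ltxx.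
Qed.

(* emb is injective on S_C modulo deck translations: equal heights force the
   translation in the q-coordinates to vanish. *)
Lemma emb_injective_mod (p p' : dom R n) : S_C C delta p -> S_C C delta p' ->
  (exists m, lattice2pi m /\ em p' = tgt_shift (em p) m) -> p' = p.
Proof.
move=> Sp Sp' [m [lm E]]; have close := S_C_s_close Sp Sp'.
move: E close; case: p {Sp Sp'} => [[x y] [s t]]; case: p' => [[x' y'] [s' t']].
move=> E close /=.
have ex : x' = x by have := congr1 (fun u : tgt R n => u.1.1.1) E.
have ey : y' = y by have := congr1 (fun u : tgt R n => u.1.1.2) E.
have ez : eta * z s' = eta * z s by have := congr1 (fun u : tgt R n => u.1.2) E.
have es : s' = s + m by have := congr1 (fun u : tgt R n => u.2.1) E.
have et := congr1 (fun u : tgt R n => u.2.2) E.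
rewrite /= /cos_radius /= ex ey in et; have {}et := addIr _ et.
have mE : m = s' - s by rewrite es addrC addKr.
suff m0 : m = 0 by rewrite es m0 addr0 ex ey et.
apply: small_deck_trivial => // [j|].
  by rewrite mE !mxE; move: (close j) => /=; lra.
by rewrite mE zlinB (mulfI (lt0r_neq0 eta0) ez) subrr normr0 pi_gt0.
Qed.

(* A deck translation bringing emb p within d of emb p' is trivial once d
   is small compared with the heights pi eta that separate translates. *)
Lemma deck_trivial_near (p p' : dom R n) m d : S_C C delta p -> S_C C delta p' ->
  lattice2pi m -> d <= 1 -> d * (eta * Sa + 1) <= pi * eta ->
  `|em p' - tgt_shift (em p) m| < d -> m = 0.
Proof.
move=> Sp Sp' lm d1 dM; have close := S_C_s_close Sp Sp'.
move: close; case: p {Sp Sp'} => [[x y] [s t]]; case: p' => [[x' y'] [s' t']].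
move=> /= close /tgt_coords_lt[_ _ /= hz hs _].
have {}hs j : `|s' 0 j - s 0 j - m 0 j| < d.
  by move: (hs j); rewrite !mxE opprD addrA.
apply: small_deck_trivial => // [j|].
  have E : m 0 j = (s' 0 j - s 0 j) - (s' 0 j - s 0 j - m 0 j) by ring.
  rewrite E; apply: le_trans (ler_normB _ _) _.
  by have := close j; have := hs j; lra.
have em : m = (s' - s) - (s' - s - m) by rewrite opprB addrC subrK.
have hZ : `|z (s' - s - m)| <= Sa * d.
  by apply: zlin_le => j; rewrite !mxE; exact/ltW/hs.
have hQ : `|z s' - z s| * eta < d.
  by move: hz; rewrite -mulrBr normrM gtr0_norm// mulrC.
have -> : z m = (z s' - z s) - z (s' - s - m) by rewrite -!zlinB -em.
rewrite -(ltr_pM2r eta0).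
apply: (@le_lt_trans _ _ ((`|z s' - z s| + `|z (s' - s - m)|) * eta)).
  by apply: ler_wpM2r; [exact: ltW | exact: ler_normB].
have : `|z (s' - s - m)| * eta <= Sa * d * eta by rewrite ler_wpM2r// ltW.
by rewrite mulrDl; move: dM; lra.
Qed.

Lemma tgt_shift0 (u : tgt R n) : tgt_shift u 0 = u.
Proof. by case: u => ? [? ?]; rewrite /tgt_shift /= addr0. Qed.

Lemma t_recover (f f' d e1 : R) (t t' : 'rV[R]_n) j :
  `|(t' + (eta * f') *: arow weights - (t + (eta * f) *: arow weights)) 0 j| < d ->
  `|f - f'| < e1 -> `|t' 0 j - t 0 j| < d + eta * Sa * e1.
Proof.
rewrite !mxE => ht hf.
have -> : t' 0 j - t 0 j = (t' 0 j + eta * f' * weights j - (t 0 j + eta * f * weights j))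
    + eta * weights j * (f - f') by ring.
apply: le_lt_trans (ler_normD _ _) _.
suff : `|eta * weights j * (f - f')| <= eta * Sa * e1 by lra.
rewrite !normrM gtr0_norm// -!mulrA; apply: ler_wpM2l; first exact: ltW.
exact: ler_pM (normr_ge0 _) (normr_ge0 _) (weight_le_sum _ _) (ltW hf).
Qed.

(* The inverse of emb is continuous for the quotient metric: near emb p only
   the trivial translate occurs, and there (x, y, s) are read off directly
   while t is recovered by t_recover. *)
Lemma emb_homeo (p : dom R n) : S_C C delta p -> forall e : R, 0 < e ->
  exists2 d : R, 0 < d & forall p', S_C C delta p' ->
    (exists m, lattice2pi m /\ `|em p' - tgt_shift (em p) m| < d) ->
    `|p' - p| < e.
Proof.
move=> Sp e e0.
have M0 : 0 < eta * Sa + 1.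
  by have := mulr_ge0 (ltW eta0) (weight_sum_ge0 weights); lra.
set e1 := e / (2 * (eta * Sa + 1)).
have e10 : 0 < e1 by rewrite divr_gt0// mulr_gt0.
have [d1 d10 cont] := continuous_at_dist
  (differentiable_continuous (cos_radius_differentiable p)) e10.
pose d := Num.min 1 (Num.min (e / 2) (Num.min d1 (pi * eta / (eta * Sa + 1)))).
have d0 : 0 < d.
  by rewrite /d !lt_min ltr01 d10 !divr_gt0 ?mulr_gt0 ?pi_gt0.
have dle1 : d <= 1 by rewrite /d ge_min lexx.
have dle2 : d <= e / 2 by rewrite /d ge_min ge_min lexx orbT.
have dle3 : d <= d1 by rewrite /d ge_min ge_min ge_min lexx !orbT.
have dM : d * (eta * Sa + 1) <= pi * eta.
  by rewrite -ler_pdivlMr// /d ge_min ge_min ge_min lexx !orbT.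
exists d => // p' Sp' [m [lm near]].
have m0 := deck_trivial_near Sp Sp' lm dle1 dM near.
move: near cont; rewrite m0 tgt_shift0.
case: p {Sp} => [[x y] [s t]]; case: p' {Sp'} => [[x' y'] [s' t']].
move=> /tgt_coords_lt[/= hx hy _ hs ht] cont.
have hf : `|cos_radius (x, y, (s, t)) - cos_radius (x', y', (s, t))| < e1.
  apply: cont; apply: norm_pair_lt; apply: norm_pair_lt => /=.
  - by rewrite distrC; apply: lt_le_trans dle3.
  - by rewrite distrC; apply: lt_le_trans dle3.
  - by apply: row_norm_lt => // k; rewrite !mxE subrr normr0.
  - by apply: row_norm_lt => // k; rewrite !mxE subrr normr0.
have h3 : eta * Sa * e1 < e / 2.
  rewrite /e1 mulrA ltr_pdivrMr ?mulr_gt0//.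
  have : eta * Sa * e < (eta * Sa + 1) * e by rewrite ltr_pM2r// ltrDl.
  lra.
apply: norm_pair_lt; apply: norm_pair_lt => /=.
- by apply: (lt_le_trans hx); lra.
- by apply: (lt_le_trans hy); lra.
- apply: row_norm_lt => // j; move: (hs j); rewrite !mxE => h.
  by apply: (lt_le_trans h); lra.
- apply: row_norm_lt => // j; rewrite !mxE.
  have := t_recover (ht j) hf; lra.
Qed.

Lemma emb_region delta0 eps (p : dom R n) : (1 <= n)%N -> 0 < delta0 ->
  0 < delta -> eta * (Sa * C) < eps -> eta * Sa < delta / (2 * Num.sqrt n%:R) ->
  S_C C delta p -> target_region delta0 eps delta (em p).
Proof.
move=> n1 d00 dl0 hE hD; case: p => [[x y] [s t]] /= [Hd Sp].
have pi0 := pi_gt0 R.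
split; [|split] => /=.
- have : 0 < pi * delta0 by rewrite mulr_gt0.
  by move: Hd; rewrite !expr2 => Hd h; nra.
- apply: le_lt_trans hE; rewrite normrM gtr0_norm//.
  apply: ler_wpM2l; first exact: ltW.
  by apply: zlin_le => j; have [h _] := Sp j; exact: ltW.
- apply: euclid_norm_lt => // j; rewrite !mxE.
  have sn0 : 0 < Num.sqrt n%:R :> R by rewrite sqrtr_gt0 ltr0n.
  set tau := delta / (2 * Num.sqrt n%:R) in hD Sp.
  have -> : delta / Num.sqrt n%:R = 2 * tau.
    by rewrite /tau; field; exact: lt0r_neq0.
  have [_ ht] := Sp j.
  have ha : `|eta * cos_radius (x, y, (s, t)) * weights j| <= eta * Sa.
    rewrite !normrM gtr0_norm// -mulrA; apply: ler_wpM2l; first exact: ltW.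
    rewrite -[Sa]mul1r.
    apply: ler_pM (normr_ge0 _) (normr_ge0 _) _ (weight_le_sum _ _).
    by rewrite cos_radiusE; exact: cos_max.
  by apply: le_lt_trans (ler_normD _ _) _; lra.
Qed.

End EmbeddingOfS.

Lemma small_scale (R : realType) (S C eps tau : R) : 0 <= S -> 0 < C ->
  0 < eps -> 0 < tau -> exists2 eta : R, 0 < eta & eta * (S * C) < eps /\ eta * S < tau.
Proof.
move=> S0 C0 eps0 tau0.
have SC0 : 0 < S * C + 1 by rewrite ltr_pwDr// mulr_ge0// ltW.
have S10 : 0 < S + 1 by rewrite ltr_pwDr.
pose eta := Num.min (eps / (S * C + 1)) (tau / (S + 1)).
have eta0 : 0 < eta by rewrite lt_min !divr_gt0.
exists eta => //; split.
- have : eta <= eps / (S * C + 1) by rewrite ge_min lexx.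
  rewrite ler_pdivlMr// => h; apply: lt_le_trans h; rewrite ltr_pM2l//; lra.
- have : eta <= tau / (S + 1) by rewrite ge_min lexx orbT.
  rewrite ler_pdivlMr// => h; apply: lt_le_trans h; rewrite ltr_pM2l//; lra.
Qed.

Theorem mainTheorem4 (R : realType) (n : nat) (delta0 eps delta C : R) :
  (1 <= n)%N -> 0 < delta0 -> 0 < eps -> 0 < delta -> 0 < C ->
  exists iota : dom R n -> tgt R n,
    [/\ embedding_mod (@S_C R n C delta) iota,
        iota @` @S_C R n C delta `<=` @target_region R n delta0 eps delta
      & forall p, @S_C R n C delta p -> forall v : dom R n,
          alpha (iota p) ('D_v iota p) = 0 <-> beta p v = 0].
Proof.
move=> n1 d00 eps0 dl0 C0.
have tau0 : 0 < delta / (2 * Num.sqrt n%:R).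
  by rewrite divr_gt0// mulr_gt0// sqrtr_gt0 ltr0n.
have [eta eta0 [hE hD]] :=
  small_scale (weight_sum_ge0 (@weights R n C)) C0 eps0 tau0.
exists (emb eta (@weights R n C)); split.
- split.
  + by exists setT; split=> //; split=> [|k]; [exact: openT | exact: emb_smooth].
  + by move=> p v _; exact: emb_immersion.
  + exact: emb_injective_mod.
  + exact: emb_homeo.
- by move=> _ [p Sp <-]; exact: emb_region.
- by move=> p _ v; rewrite alpha_emb.
Qed.
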